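(* Let $G$ be a graph of order $n$, not isomorphic to $K_n$. If $W$ is a $\tau$-set of $G$ such that $G[W]\cong K_{\tau}$ (where $\tau=\tau(G)$), then $\beta_p(G)\ge\tau(G)+1$.
   Context: All graphs are finite, simple, undirected and connected. Two vertices $u,v$ are twins if $N(u)\setminus\{v\}=N(v)\setminus\{u\}$; the twin number $\tau(G)$ is the maximum cardinality of an equivalence class of the twin relation; a $\tau$-set is a set of pairwise twin vertices of cardinality $\tau(G)$. For a partition $\Pi=\{S_1,\dots,S_k\}$ of $V(G)$, $r(u|\Pi)=(d(u,S_1),\dots,d(u,S_k))$ with $d(u,S)=\min_{w\in S}d(u,w)$; $\Pi$ is locating if $r(u|\Pi)\ne r(v|\Pi)$ for all distinct $u,v$; $\beta_p(G)$ is the minimum size of a locating partition. *)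

From mathcomp Require Import all_boot.
Set Implicit Arguments. Unset Strict Implicit. Unset Printing Implicit Defensive.

Section Graph.
Variables (T : finType) (e : rel T).

Definition simple_graph := symmetric e /\ irreflexive e.
Definition connected_graph := forall u v : T, connect e u v.

Fixpoint reach (k : nat) (u v : T) : bool :=
  if k is k'.+1 then (u == v) || [exists w, e u w && reach k' w v]
  else u == v.

(* graph distance: least k with v reachable from u within k steps
   (in a connected graph this is < #|T|) *)
Definition dist (u v : T) : nat := find (fun k => reach k u v) (iota 0 #|T|).

(* d(u,S) = min_{w in S} d(u,w)  (used only for nonempty S) *)
Definition setdist (u : T) (S : {set T}) : nat :=
  \big[minn/#|T|]_(w in S) dist u w.

Definition locating (P : {set {set T}}) : bool :=
  partition P [set: T] &&
  [forall u, forall v, (u != v) ==> [exists S in P, setdist u S != setdist v S]].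

(* partition dimension beta_p(G): minimum size of a locating partition
   (the singleton partition is locating and has size #|T|) *)
Definition betap : nat :=
  \big[minn/#|T|]_(P : {set {set T}} | locating P) #|P|.

Definition twin (u v : T) : bool :=
  [set w | e u w] :\ v == [set w | e v w] :\ u.

Definition twin_class (u : T) : {set T} := [set v | twin u v].
Definition tau : nat := \max_(u : T) #|twin_class u|.

Definition tau_set (W : {set T}) : bool :=
  [forall u in W, forall v in W, twin u v] && (#|W| == tau).

Definition is_clique (W : {set T}) : bool :=
  [forall u in W, forall v in W, (u != v) ==> e u v].

Definition complete_graph : bool := [forall u, forall v, (u != v) ==> e u v].
End Graph.

From mathcomp Require Import all_boot.
Set Implicit Arguments. Unset Strict Implicit. Unset Printing Implicit Defensive.

(* Twins have the same distance to every vertex other than themselves, so a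
   locating partition must put the vertices of a twin class W in pairwise
   distinct blocks.  When W is a clique, connectedness and the twin property
   give a vertex x outside W adjacent to all of W.  If the partition had only
   #|W| blocks, each block would be the block of some w in W, x would share its
   block with some w, and x and w would both be at distance 1 from every other
   block: they would have the same distance vector. *)

Section Distances.
Variables (T : finType) (e : rel T).

Lemma reachS k u v : reach e k u v -> reach e k.+1 u v.
Proof.
elim: k u => [|k IH] u /=; first by move=> ->.
case/orP=> [-> // | /existsP [w /andP [euw wv]]].
by apply/orP; right; apply/existsP; exists w; rewrite euw; exact: IH.
Qed.

Lemma dist_refl u : dist e u u = 0.
Proof.
rewrite /dist; have : 0 < #|T| by apply/card_gt0P; exists u.
by case: #|T| => [|n] //= _; rewrite eqxx.
Qed.

Lemma dist_gt0 u v : u != v -> 0 < dist e u v.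
Proof.
move=> uv; rewrite /dist; have : 0 < #|T| by apply/card_gt0P; exists u.
by case: #|T| => [|n] //= _; rewrite (negbTE uv).
Qed.

Lemma dist_adj u v : u != v -> e u v -> dist e u v = 1.
Proof.
move=> uv euv; rewrite /dist.
have : 1 < #|T| by rewrite (cardD1 u) (cardD1 v) !inE eq_sym uv.
case: #|T| => [|[|n]] //= _; rewrite (negbTE uv) /=.
suff -> : [exists w, e u w && (w == v)] by [].
by apply/existsP; exists v; rewrite euv eqxx.
Qed.

Lemma bigmin_le (S : {set T}) (F : T -> nat) m w :
  w \in S -> \big[minn/m]_(i in S) F i <= F w.
Proof.
move=> wS; elim: (index_enum T) (mem_index_enum w) => // i r IH.
rewrite in_cons big_cons => /orP [/eqP <- | wr]; first by rewrite wS geq_minl.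
by case: (i \in S); [apply: leq_trans (geq_minr _ _) (IH wr) | exact: IH].
Qed.

Lemma setdist_mem u (S : {set T}) : u \in S -> setdist e u S = 0.
Proof. by move=> uS; apply/eqP; rewrite -leqn0 -(dist_refl u) bigmin_le. Qed.

Lemma setdist_gt0 u (S : {set T}) : u \notin S -> 0 < setdist e u S.
Proof.
move=> uS; apply: (big_ind (fun m => 0 < m)).
- by apply/card_gt0P; exists u.
- by move=> a b a_gt0 b_gt0; rewrite leq_min a_gt0 b_gt0.
- by move=> w wS; apply: dist_gt0; apply: contraNneq uS => ->.
Qed.

Lemma setdist_adj u w (S : {set T}) :
  u \notin S -> w \in S -> e u w -> setdist e u S = 1.
Proof.
move=> uS wS euw; apply/eqP; rewrite eqn_leq setdist_gt0 // andbT.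
by rewrite -(@dist_adj u w) ?bigmin_le //; apply: contraNneq uS => ->.
Qed.

End Distances.

Section Twins.
Variables (T : finType) (e : rel T).

Lemma twin_refl u : twin e u u.
Proof. by rewrite /twin. Qed.

Lemma twinC u v : twin e u v = twin e v u.
Proof. by rewrite /twin eq_sym. Qed.

Lemma twin_adj u v x : twin e u v -> x != v -> e u x -> e v x.
Proof.
move=> /eqP tw_uv xv eux.
have : x \in [set w | e u w] :\ v by rewrite !inE xv eux.
by rewrite tw_uv !inE => /andP [].
Qed.

Lemma tau_gt0 (u : T) : 0 < tau e.
Proof.
apply: (@leq_trans #|twin_class e u|); last exact: (leq_bigmax u).
by apply/card_gt0P; exists u; rewrite inE twin_refl.
Qed.

Lemma twin_reach k u v z : twin e u v -> z != u -> reach e k u z -> reach e k v z.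
Proof.
move=> tw_uv zu; case: k => [|k] /=; first by rewrite eq_sym (negbTE zu).
rewrite eq_sym (negbTE zu) /= => /existsP [w /andP [euw wz]].
have [<- | wv] := eqVneq w v; first exact: reachS.
by apply/orP; right; apply/existsP; exists w; rewrite wz (twin_adj tw_uv).
Qed.

Lemma twin_dist u v z :
  twin e u v -> z != u -> z != v -> dist e u z = dist e v z.
Proof.
move=> tw_uv zu zv; apply: eq_find => k; apply/idP/idP; apply: twin_reach => //.
by rewrite twinC.
Qed.

Lemma twin_setdist u v (S : {set T}) :
  twin e u v -> u \notin S -> v \notin S -> setdist e u S = setdist e v S.
Proof.
move=> tw_uv uS vS; apply: eq_bigr => w wS.
by apply: twin_dist => //; [apply: contraNneq uS => <- | apply: contraNneq vS => <-].
Qed.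

End Twins.

Section LocatingPartitions.
Variables (T : finType) (e : rel T).

Lemma mem_block_pblock (P : {set {set T}}) S x :
  partition P [set: T] -> S \in P -> (x \in S) = (pblock P x == S).
Proof.
case/and3P=> /eqP coverP trivP _ PS; apply/idP/eqP => [xS | <-].
- exact: def_pblock.
- by rewrite mem_pblock coverP inE.
Qed.

Lemma locating_pblock_eq (P : {set {set T}}) u v :
  locating e P -> pblock P u = pblock P v ->
  (forall S, S \in P -> u \notin S -> v \notin S -> setdist e u S = setdist e v S) ->
  u = v.
Proof.
case/andP=> partP /forallP separates pblock_eq setdist_eq.
apply/eqP/negPn/negP => uv; move/(_ u)/forallP/(_ v): separates; rewrite uv /=.
case/existsP=> S /andP [PS /eqP]; apply.
have memS : (u \in S) = (v \in S) by rewrite !(mem_block_pblock _ partP PS) pblock_eq.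
have [uS | uS] := boolP (u \in S); first by rewrite !setdist_mem // -memS.
by rewrite setdist_eq // -memS.
Qed.

Lemma betap_ge n :
  n <= #|T| -> (forall P, locating e P -> n <= #|P|) -> n <= betap e.
Proof.
move=> nT locP; apply: (big_ind (fun m => n <= m)) => // a b na nb.
by rewrite leq_min na nb.
Qed.

Lemma locating_card_gt (P : {set {set T}}) (W : {set T}) x :
  locating e P ->
  {in W &, forall u v, twin e u v} -> {in W &, forall u v, u != v -> e u v} ->
  x \notin W -> {in W, forall w, e x w} -> #|W| < #|P|.
Proof.
move=> locP twinW cliqueW xW adj_x.
have /and3P [/eqP coverP _ _] := proj1 (andP locP).
have in_cover z : z \in cover P by rewrite coverP inE.
have pblock_inj : {in W &, injective (pblock P)}.
  move=> w w' wW w'W eq_ww'; apply: (locating_pblock_eq locP eq_ww') => S _.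
  exact: twin_setdist (twinW _ _ wW w'W).
rewrite ltnNge; apply/negP => cardP.
have imW : pblock P @: W = P.
  apply/eqP; rewrite eqEcard card_in_imset // cardP andbT.
  by apply/subsetP => _ /imsetP [w _ ->]; rewrite pblock_mem.
have /imsetP [w wW pblock_xw] : pblock P x \in pblock P @: W by rewrite imW pblock_mem.
have /eqP xw : x != w by apply: contraNneq xW => ->.
apply: xw (locating_pblock_eq locP pblock_xw _) => S.
rewrite -imW => /imsetP [w' w'W ->] xS wS.
have w'S : w' \in pblock P w' by rewrite mem_pblock.
have ww' : w != w' by apply: contraNneq wS => ->.
by rewrite (setdist_adj xS w'S (adj_x _ w'W)) (setdist_adj wS w'S (cliqueW _ _ wW w'W ww')).
Qed.

End LocatingPartitions.

Section CliqueNeighbour.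
Variables (T : finType) (e : rel T).

Lemma connect_exit (A : {set T}) u v :
  connect e u v -> u \in A -> v \notin A -> exists w x, [/\ w \in A, x \notin A & e w x].
Proof.
case/connectP=> p; elim: p u => [|z p IH] u /=; first by move=> _ -> uA; rewrite uA.
case/andP=> euz pz vlast uA vA.
have [zA | zA] := boolP (z \in A); first exact: IH pz vlast zA vA.
by exists u, z.
Qed.

Lemma not_complete_clique_proper (W : {set T}) :
  ~~ complete_graph e -> {in W &, forall u v, u != v -> e u v} -> exists y, y \notin W.
Proof.
case/forallPn=> u /forallPn [v]; rewrite negb_imply => /andP [uv neuv] cliqueW.
have [uW | uW] := boolP (u \in W); last by exists u.
by exists v; apply: contra neuv => vW; apply: cliqueW.
Qed.

Lemma twin_set_common_neighbour (W : {set T}) w0 y :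
  symmetric e -> connected_graph e -> {in W &, forall u v, twin e u v} ->
  w0 \in W -> y \notin W -> exists2 x, x \notin W & {in W, forall w, e x w}.
Proof.
move=> esym conn twinW w0W yW.
have [w1 [x [w1W xW ew1x]]] := connect_exit (conn w0 y) w0W yW.
exists x => // w wW; rewrite esym.
apply: (twin_adj (twinW _ _ w1W wW)) ew1x.
by apply: contraNneq xW => ->.
Qed.

End CliqueNeighbour.

Theorem proposition15 (T : finType) (e : rel T) :
  simple_graph e -> connected_graph e ->
  ~~ complete_graph e ->
  forall W : {set T}, tau_set e W -> is_clique e W ->
  (tau e).+1 <= betap e.
Proof.
move=> [esym _] conn ncomplete W /andP [/forallP twin_set /eqP cardW] /forallP clique.
have twinW : {in W &, forall u v, twin e u v}.
  by move=> u v uW vW; move/(_ u): twin_set; rewrite uW => /forallP/(_ v); rewrite vW.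
have cliqueW : {in W &, forall u v, u != v -> e u v}.
  by move=> u v uW vW uv; move/(_ u): clique; rewrite uW => /forallP/(_ v); rewrite vW uv.
have [y yW] := not_complete_clique_proper ncomplete cliqueW.
have [w0 w0W] : exists w0, w0 \in W by apply/card_gt0P; rewrite cardW (tau_gt0 _ y).
have [x xW adj_x] := twin_set_common_neighbour esym conn twinW w0W yW.
rewrite -cardW; apply: betap_ge => [|P locP].
- by have := max_card (x |: W); rewrite cardsU1 xW.
- exact: locating_card_gt locP twinW cliqueW xW adj_x.
Qed.
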